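(* Let $N\geq2$, let $|\psi\rangle\in\mathrm{Sym}_N$ be nonzero, and let $n=\lfloor N/2\rfloor+1$. Let $\rho^{(n)}=\mathrm{Tr}_{N-n}(|\psi\rangle\langle\psi|)$ be the reduced operator on the first $n$ qubits (with $\rho^{(N)}=|\psi\rangle\langle\psi|$ if $n=N$). Then there exists a nonzero $|\phi\rangle\in\mathrm{Sym}_n$ with $\rho^{(n)}|\phi\rangle=0$. Consequently, the operator $H=\sum_{i=1}^N h_i$, where $h_i$ is the orthogonal projector onto $\ker(\rho^{(n)})\cap\mathrm{Sym}_n$ acting on qubits $i,i+1,\dots,i+n-1$ (indices mod $N$), is a nonzero positive semidefinite operator with $H|\psi\rangle=0$.
   Context: The one-qubit space is $\mathbb{C}^2$. $\mathrm{Sym}_n\subset(\mathbb{C}^2)^{\otimes n}$ denotes the symmetric subspace (vectors invariant under all permutations of the tensor factors), of dimension $n+1$. *)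

(* Scalars: an arbitrary numClosedFieldType C (e.g. algC),
   the MathComp abstraction of the complex numbers with conjugation. *)
From HB Require Import structures.
From mathcomp Require Import all_boot all_order all_algebra all_fingroup.
Set Implicit Arguments. Unset Strict Implicit. Unset Printing Implicit Defensive.
Import Order.TTheory GRing.Theory Num.Theory.
Local Open Scope ring_scope.

(* Computational basis of (C^2)^{⊗n}: bit strings of length n;
   qubit k (0-based) is the k-th entry. *)
Definition bits (n : nat) := (n.-tuple bool).

Section Qubits.
Variable C : numClosedFieldType.

(* vectors of (C^2)^{⊗n} and operators on it (matrix entries in the
   computational basis) *)
Definition vec (n : nat) := bits n -> C.
Definition op (n : nat) := bits n -> bits n -> C.

Definition nonzero_vec n (v : vec n) : Prop := exists x, v x != 0.
Definition nonzero_op n (A : op n) : Prop := exists x y, A x y != 0.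

Definition permute_bits n (s : 'S_n) (x : bits n) : bits n :=
  [tuple tnth x (s i) | i < n].

Definition sym_state n (v : vec n) : Prop :=
  forall (s : 'S_n) (x : bits n), v (permute_bits s x) = v x.

Definition apply n (A : op n) (v : vec n) : vec n :=
  fun x => \sum_(y : bits n) A x y * v y.

Definition outer n (v : vec n) : op n := fun x y => v x * (v y)^*.

Definition glue N n m (x : bits n) (z : bits m) : bits N :=
  [tuple nth false (tval x ++ tval z) i | i < N].

Definition ptrace N n (A : op N) : op n :=
  fun x y => \sum_(z : bits (N - n)) A (glue N x z) (glue N y z).

Definition reduced N n (psi : vec N) : op n := @ptrace N n (outer psi).

Definition kerSym n (rho : op n) (v : vec n) : Prop :=
  sym_state v /\ forall x, apply rho v x = 0.

Definition is_orth_proj n (P : op n) (S : vec n -> Prop) : Prop :=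
  [/\ (forall x y, \sum_(z : bits n) P x z * P z y = P x y),
      (forall x y, P x y = (P y x)^*)
    & (forall v, S v <-> (forall x, apply P v x = v x))].

Definition psd n (A : op n) : Prop :=
  forall v : vec n, 0 <= \sum_(x : bits n) \sum_(y : bits n) (v x)^* * A x y * v y.

Definition in_window N n (i j : 'I_N) : bool :=
  [exists k : 'I_n, (j : nat) == ((i + k) %% N)%N].

Definition restr N n (i : 'I_N) (x : bits N) : bits n :=
  [tuple nth false (tval x) ((i + k) %% N)%N | k < n].

Definition embed N n (i : 'I_N) (h : op n) : op N :=
  fun x y =>
    if [forall j : 'I_N, ~~ @in_window N n i j ==> (tnth x j == tnth y j)]
    then h (@restr N n i x) (@restr N n i y) else 0.

Definition local_sum N n (h : op n) : op N :=
  fun x y => \sum_(i < N) embed i h x y.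

End Qubits.

Arguments reduced {C N} n psi _ _.
Arguments local_sum {C} N {n} h _ _.

From HB Require Import structures.
From mathcomp Require Import all_boot all_order all_algebra all_fingroup.
From mathcomp Require Import zify ring.
Import Order.TTheory GRing.Theory Num.Theory.
Local Open Scope ring_scope.
Set Implicit Arguments. Unset Strict Implicit. Unset Printing Implicit Defensive.

(* Write psi(y, z) for the amplitudes of psi, y on the first n qubits and z on
   the other m = N - n.  A vector u lies in ker rho^(n) iff it is orthogonal
   to every slice psi(., z).  For symmetric psi and u these orthogonality
   conditions only depend on the Hamming weights, so a symmetric kernel vector
   is a nonzero solution of m + 1 linear equations in n + 1 unknowns, which
   exists because m < n.  Each term of H is h = h^* h moved to a window, hence
   positive semidefinite; it kills psi because, after permuting the qubits so
   that the window comes first, the columns of h are kernel vectors of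
   rho^(n).  H is nonzero since its diagonal entries are sums of nonnegative
   diagonal entries of h, and h fixes phi. *)

Lemma count_permute_bits n (s : 'S_n) (x : bits n) :
  count id (permute_bits s x) = count id x.
Proof.
have: perm_eq (permute_bits s x) x by apply/tuple_permP; exists s.
by move/seq.permP=> /(_ id).
Qed.

Lemma perm_eq_bits (s1 s2 : seq bool) :
  size s1 = size s2 -> count id s1 = count id s2 -> perm_eq s1 s2.
Proof.
move=> eq_size eq_weight; apply/seq.permP => a.
have count_negb (s : seq bool) : count negb s = (size s - count id s)%N.
  by rewrite -(count_predC id s) addKn.
case a1: (a true); case a0: (a false).
- by rewrite !(@eq_count _ a predT) ?count_predT // => -[].
- by rewrite !(@eq_count _ a id) // => -[].
- by rewrite !(@eq_count _ a negb) ?count_negb ?eq_size ?eq_weight // => -[].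
- by rewrite !(@eq_count _ a pred0) ?count_pred0 // => -[].
Qed.

Lemma sym_state_count (C : numClosedFieldType) n (v : vec C n) :
  sym_state v -> forall x y : bits n, count id x = count id y -> v x = v y.
Proof.
move=> v_sym x y eq_weight.
have /tuple_permP[s eq_y] : perm_eq y x by apply: perm_eq_bits; rewrite ?size_tuple.
have -> : y = permute_bits s x by apply: val_inj; rewrite /= eq_y.
by rewrite v_sym.
Qed.

Definition ones_prefix n j : bits n := [tuple (i < j)%N | i < n].

Lemma count_ones_prefix n j : (j <= n)%N -> count id (ones_prefix n j) = j.
Proof.
move=> le_jn; rewrite /= count_map.
rewrite (eq_count (a2 := (fun i => i < j)%N \o val)) // -count_map val_enum_ord.
rewrite -(subnKC le_jn) iotaD count_cat add0n.
rewrite (eq_in_count (a2 := predT)); last by move=> i; rewrite mem_iota /=; lia.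
rewrite count_predT size_iota (eq_in_count (a2 := pred0)) ?count_pred0 ?addn0 //.
by move=> i; rewrite mem_iota /=; lia.
Qed.

Lemma nth_mktuple_lt (T : Type) N (f : 'I_N -> T) d k (lt_kN : (k < N)%N) :
  nth d [tuple f j | j < N] k = f (Ordinal lt_kN).
Proof. by rewrite (nth_mktuple _ _ (Ordinal lt_kN)). Qed.

Lemma glue_cat N n m (w : bits n) (z : bits m) :
  (n + m = N)%N -> tval (glue N w z) = tval w ++ tval z.
Proof.
move=> eqN; apply: (@eq_from_nth _ false); first by rewrite size_cat !size_tuple.
by move=> k; rewrite size_tuple => lt_kN; rewrite /glue (nth_mktuple_lt _ _ lt_kN).
Qed.

Lemma count_glue N n (w : bits n) (z : bits (N - n)) :
  (n <= N)%N -> count id (glue N w z) = (count id w + count id z)%N.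
Proof. by move=> le_nN; rewrite glue_cat ?count_cat ?subnKC. Qed.

Lemma sum_conjCM_eq0 (C : numClosedFieldType) (I : finType) (a : I -> C) :
  \sum_i (a i)^* * a i = 0 -> forall i, a i = 0.
Proof.
move=> sum0 i.
have ge0 j : predT j -> 0 <= (a j)^* * a j by rewrite mulrC mul_conjC_ge0.
by apply/eqP; rewrite -mul_conjC_eq0 mulrC (psumr_eq0P ge0 sum0).
Qed.

Lemma block_gram_ge0 (C : numClosedFieldType) (T K : finType) (key : T -> K) (g : T -> C) :
  0 <= \sum_x \sum_y (if key x == key y then (g x)^* * g y else 0).
Proof.
pose G k := \sum_(x | key x == k) g x.
have -> : \sum_x \sum_y (if key x == key y then (g x)^* * g y else 0)
          = \sum_k (G k)^* * G k.
  transitivity (\sum_x (g x)^* * G (key x)).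
    apply: eq_bigr => x _; rewrite /G mulr_sumr [RHS]big_mkcond /=.
    by apply: eq_bigr => y _; rewrite eq_sym; case: eqP.
  rewrite (partition_big key predT) //=; apply: eq_bigr => k _.
  by rewrite /G rmorph_sum mulr_suml /=; apply: eq_bigr => x /eqP <-.
by apply: sumr_ge0 => k _; rewrite mulrC mul_conjC_ge0.
Qed.

Lemma left_kernel_neq0 (F : fieldType) p q (M : 'M[F]_(p, q)) :
  (q < p)%N -> exists2 f : 'rV_p, f != 0 & f *m M = 0.
Proof.
move=> lt_qp.
have /rowV0Pn[f /sub_kermxP fM f_nz] : kermx M != 0.
  by rewrite kermx_eq0 -row_leq_rank -ltnNge (leq_ltn_trans (rank_leq_col M)).
by exists f.
Qed.

Lemma sum_enum_val (C : numClosedFieldType) (T : finType) (F : T -> C) :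
  \sum_(y : T) F y = \sum_(i < #|T|) F (enum_val i).
Proof. by rewrite -big_enum_val. Qed.

(* The projector is B^* B for an orthonormal basis B (Gram-Schmidt) of the
   common kernel of the functionals L t, vectors being written as rows. *)
Lemma orth_proj_kernel_exists (C : numClosedFieldType) (T I : finType) (L : I -> T -> C) :
  exists P : T -> T -> C,
   [/\ forall x y, \sum_z P x z * P z y = P x y,
       forall x y, P x y = (P y x)^*
     & forall v : T -> C, (forall t, \sum_y L t y * v y = 0) <->
                          (forall x, \sum_y P x y * v y = v x)].
Proof.
pose d := #|T|.
pose vrow (v : T -> C) : 'rV[C]_d := \row_i v (enum_val i).
pose K : 'M[C]_(d, #|I|) := \matrix_(i, j) L (enum_val j) (enum_val i).
pose B := schmidt (row_base (kermx K)).
have B_unitary : B *m (B ^t* )%sesqui = 1%:M.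
  by apply/unitarymxP; apply: schmidt_unitarymx; exact: rank_leq_col.
have span_B (w : 'rV_d) : (w <= B)%MS = (w <= kermx K)%MS.
  by rewrite /B (eqmx_schmidt_free (row_base_free _)) eq_row_base.
pose P := (B ^t* )%sesqui *m B.
have PP : P *m P = P by rewrite /P mulmxA -(mulmxA _ B) B_unitary mulmx1.
have fix_P (w : 'rV_d) : (w *m P == w) = (w <= kermx K)%MS.
  rewrite -span_B; apply/eqP/idP => [<-|/submxP[D ->]].
    by rewrite /P mulmxA submxMl.
  by rewrite /P mulmxA -(mulmxA D) B_unitary mulmx1.
exists (fun x y => P (enum_rank y) (enum_rank x)); split.
- move=> x y; rewrite -[RHS]/(P (enum_rank y) (enum_rank x)) -{3}PP mxE.
  by rewrite (sum_enum_val (fun z => _)); apply: eq_bigr => i _; rewrite enum_valK mulrC.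
- move=> x y; rewrite !mxE rmorph_sum; apply: eq_bigr => k _.
  by rewrite !mxE rmorphM /= mulrC conjCK.
- move=> v.
  have L_row t : \sum_y L t y * v y = (vrow v *m K) 0 (enum_rank t).
    rewrite mxE sum_enum_val; apply: eq_bigr => i _.
    by rewrite !mxE enum_rankK mulrC.
  have P_row x : \sum_y P (enum_rank y) (enum_rank x) * v y
                 = (vrow v *m P) 0 (enum_rank x).
    rewrite mxE sum_enum_val; apply: eq_bigr => i _.
    by rewrite !mxE enum_valK mulrC.
  split => [Lv0 x|Pv t].
  + rewrite P_row; have /eqP -> : vrow v *m P == vrow v.
      rewrite fix_P sub_kermx; apply/eqP/rowP => j.
      by rewrite -(enum_valK j) -L_row Lv0 mxE.
    by rewrite /vrow mxE enum_rankK.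
  + have : vrow v *m P == vrow v.
      by apply/eqP/rowP => j; rewrite -(enum_valK j) -P_row Pv /vrow mxE enum_rankK.
    by rewrite fix_P sub_kermx L_row => /eqP ->; rewrite mxE.
Qed.

Lemma sum_delta_mul (C : numClosedFieldType) (T : finType) (a : T) (v : T -> C) :
  \sum_y (y == a)%:R * v y = v a.
Proof.
rewrite (bigD1 a) //= eqxx mul1r big1 ?addr0 // => y /negbTE ->.
by rewrite mul0r.
Qed.

(* Sym_n is the common kernel of the functionals v |-> v (s x) - v x. *)
Lemma orth_proj_kerSym (C : numClosedFieldType) n (rho : op C n) :
  exists h, is_orth_proj h (kerSym rho).
Proof.
pose L (t : ({perm 'I_n} * bits n + bits n)%type) (y : bits n) : C :=
  match t with
  | inl (s, x) => (y == permute_bits s x)%:R - (y == x)%:R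
  | inr x => rho x y end.
have L_perm s x (v : vec C n) :
    \sum_y L (inl (s, x)) y * v y = v (permute_bits s x) - v x.
  rewrite -!sum_delta_mul -sumrB; apply: eq_bigr => y _; exact: mulrBl.
have [P [PP P_herm P_fix]] := orth_proj_kernel_exists L.
exists P; split => // v; rewrite -P_fix; split.
- by move=> [v_sym v_ker] [[s x]|x]; rewrite ?L_perm ?v_sym ?subrr //; exact: v_ker.
- move=> Lv0; split => [s x|x]; last exact: (Lv0 (inr x)).
  by apply/eqP; rewrite -subr_eq0 -L_perm Lv0.
Qed.

Section OrthProj.
Variables (C : numClosedFieldType) (n : nat) (P : op C n) (S : vec C n -> Prop).
Hypothesis P_proj : is_orth_proj P S.

Lemma orth_proj_gram a b : P a b = \sum_c (P c a)^* * P c b.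
Proof.
by case: P_proj => PP P_herm _; rewrite -PP; apply: eq_bigr => c _; rewrite P_herm.
Qed.

Lemma orth_proj_col a : S (fun w => P w a).
Proof. by case: P_proj => PP _ P_fix; apply/P_fix => x; rewrite /apply PP. Qed.

Lemma orth_proj_neq0 v : S v -> nonzero_vec v -> nonzero_op P.
Proof.
case: P_proj => _ _ P_fix /P_fix Pv [x vx_neq0]; exists x.
apply/existsP/negP => /existsP no_y; move: vx_neq0; rewrite -Pv /apply big1 ?eqxx //.
move=> y _; suff -> : P x y = 0 by rewrite mul0r.
by apply/eqP/negPn/negP => Pxy; apply: no_y; exists y.
Qed.

End OrthProj.

Lemma apply_reducedE (C : numClosedFieldType) N n (psi : vec C N) (u : vec C n) x :
  apply (reduced n psi) u x =
  \sum_(z : bits (N - n)) psi (glue N x z) * \sum_y (psi (glue N y z))^* * u y.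
Proof.
rewrite /apply; under eq_bigr do rewrite /reduced /ptrace /outer mulr_suml.
rewrite exchange_big; apply: eq_bigr => z _; rewrite mulr_sumr.
by apply: eq_bigr => y _; rewrite mulrA.
Qed.

(* <u, rho u> is the sum over z of |<psi(., z), u>|^2. *)
Lemma reduced_kerP (C : numClosedFieldType) N n (psi : vec C N) (u : vec C n) :
  (forall x, apply (reduced n psi) u x = 0) <->
  (forall z : bits (N - n), \sum_y (psi (glue N y z))^* * u y = 0).
Proof.
pose a (z : bits (N - n)) := \sum_y (psi (glue N y z))^* * u y.
split=> [u_ker|a0 x]; last by rewrite apply_reducedE big1 // => z _; rewrite a0 mulr0.
suff /sum_conjCM_eq0 : \sum_z (a z)^* * a z = 0 by [].
transitivity (\sum_x (u x)^* * apply (reduced n psi) u x); last first.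
  by rewrite big1 // => x _; rewrite u_ker mulr0.
under [RHS]eq_bigr do rewrite apply_reducedE mulr_sumr.
rewrite exchange_big; apply: eq_bigr => z _.
rewrite /a rmorph_sum mulr_suml; apply: eq_bigr => x _.
by rewrite rmorphM /= conjCK; ring.
Qed.

Lemma count_bits_lt n (x : bits n) : (count id x < n.+1)%N.
Proof. by have := count_size id x; rewrite size_tuple. Qed.

Section SymKernel.
Variables (C : numClosedFieldType) (N n : nat) (psi : vec C N).
Hypotheses (psi_sym : sym_state psi) (le_nN : (n <= N)%N).
Local Notation m := (N - n)%N.

(* Entry (j, k) sums conj psi(y, z) over the y of weight j, for any z of
   weight k: by symmetry of psi the choice of z does not matter. *)
Definition weight_matrix : 'M[C]_(n.+1, m.+1) := \matrix_(j, k)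
  \sum_(y : bits n | inord (count id y) == j) (psi (glue N y (ones_prefix m k)))^*.

Lemma weight_matrix_mul (f : 'rV_n.+1) (z : bits m) :
  \sum_(y : bits n) (psi (glue N y z))^* * f 0 (inord (count id y))
  = (f *m weight_matrix) 0 (inord (count id z)).
Proof.
rewrite mxE; under [RHS]eq_bigr do rewrite mxE mulr_sumr.
rewrite (partition_big (fun y : bits n => inord (count id y) : 'I_n.+1) predT) //=.
apply: eq_bigr => l _; apply: eq_bigr => y /eqP <-.
rewrite mulrC; congr (_ * _^*); apply: sym_state_count => //.
by rewrite !count_glue // count_ones_prefix inordK ?count_bits_lt // -ltnS count_bits_lt.
Qed.

Lemma sym_kernel_exists : (m < n)%N ->
  exists phi : vec C n, nonzero_vec phi /\ sym_state phi /\
    forall x, apply (reduced n psi) phi x = 0.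
Proof.
move=> lt_mn.
have [f f_nz fM] := left_kernel_neq0 weight_matrix lt_mn.
have [j fj_nz] : exists j, f 0 j != 0.
  apply/existsP; apply: contraR f_nz => /existsPn f0.
  by apply/eqP/rowP => j; rewrite mxE; apply/eqP/negPn/f0.
exists (fun y => f 0 (inord (count id y))); split; [|split].
- exists (ones_prefix n j); rewrite count_ones_prefix ?inord_val //.
  by rewrite -ltnS ltn_ord.
- by move=> s x; rewrite count_permute_bits.
- by apply/reduced_kerP => z; rewrite weight_matrix_mul fM mxE.
Qed.

End SymKernel.

Lemma modn_lt_double N a : (a < N + N)%N -> (a %% N = if a < N then a else a - N)%N.
Proof.
move=> lt_a2N; case: ltnP => le_Na; first by rewrite modn_small.
by rewrite -{1}(subnK le_Na) modnDr modn_small //; lia.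
Qed.

Definition window_pos N (i : 'I_N) (j : nat) := ((j + (N - i)) %% N)%N.

Lemma window_posK N (i : 'I_N) k : (k < N)%N -> window_pos i ((i + k) %% N) = k.
Proof.
move=> lt_kN; have lt_iN := ltn_ord i.
rewrite /window_pos (modn_lt_double (a := (i + k)%N)); last by lia.
by case: ltnP => ?; rewrite modn_lt_double; (try case: ltnP); lia.
Qed.

Lemma window_siteK N (i : 'I_N) j : (j < N)%N -> ((i + window_pos i j) %% N = j)%N.
Proof.
move=> lt_jN; have lt_iN := ltn_ord i.
rewrite /window_pos (modn_lt_double (a := (j + (N - i))%N)); last by lia.
by case: ltnP => ?; rewrite modn_lt_double; (try case: ltnP); lia.
Qed.

Lemma window_site_lt N (i : 'I_N) k : ((i + k) %% N < N)%N.
Proof. by rewrite ltn_pmod //; case: N i => [[]|]. Qed.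

Lemma in_windowE N n (i j : 'I_N) :
  (n <= N)%N -> in_window n i j = (window_pos i j < n)%N.
Proof.
move=> le_nN; apply/existsP/idP => [[k /eqP ->]|lt_pos].
  by rewrite window_posK //; have := ltn_ord k; lia.
by exists (Ordinal lt_pos); rewrite /= window_siteK.
Qed.

Lemma nth_bits N (y : bits N) a (lt_aN : (a < N)%N) : nth false y a = tnth y (Ordinal lt_aN).
Proof. by rewrite (tnth_nth false). Qed.

Section Window.
Variables (N n : nat) (i : 'I_N).
Hypothesis le_nN : (n <= N)%N.

Definition outside (x : bits N) : {ffun 'I_N -> bool} :=
  [ffun j => ~~ in_window n i j && tnth x j].

Lemma agree_outsideE (x y : bits N) :
  [forall j : 'I_N, ~~ in_window n i j ==> (tnth x j == tnth y j)]
  = (outside x == outside y).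
Proof.
apply/forallP/eqP => [agree|eq_out j].
  apply/ffunP => j; rewrite !ffunE; have := agree j.
  by case: (in_window n i j) => //= /eqP ->.
have := congr1 (fun f : {ffun 'I_N -> bool} => f j) eq_out; rewrite !ffunE.
by case: (in_window n i j) => //= ->.
Qed.

Definition fill (x : bits N) (w : bits n) : bits N :=
  [tuple if in_window n i j then nth false w (window_pos i j) else tnth x j | j < N].

Lemma outside_fill x w : outside (fill x w) = outside x.
Proof.
apply/ffunP => j; rewrite !ffunE tnth_mktuple.
by case: (in_window n i j).
Qed.

Lemma restr_fill x w : restr n i (fill x w) = w.
Proof.
apply: eq_from_tnth => k.
rewrite tnth_mktuple (nth_bits _ (window_site_lt i k)) tnth_mktuple.
rewrite in_windowE //= window_posK; last by have := ltn_ord k; lia.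
by rewrite ltn_ord (tnth_nth false).
Qed.

Lemma fill_restr x y : outside y = outside x -> fill x (restr n i y) = y.
Proof.
move=> eq_out; apply: eq_from_tnth => j; rewrite tnth_mktuple.
case: ifP => in_win.
  move: (in_win); rewrite in_windowE // => lt_pos.
  rewrite (nth_mktuple_lt _ _ lt_pos) /= (nth_bits _ (window_site_lt i _)); congr tnth.
  by apply: val_inj; rewrite /= window_siteK.
have := congr1 (fun f : {ffun 'I_N -> bool} => f j) eq_out.
by rewrite !ffunE in_win.
Qed.

Lemma sum_outside_fiber (C : numClosedFieldType) (x : bits N) (F : bits N -> C) :
  \sum_(y | outside y == outside x) F y = \sum_(w : bits n) F (fill x w).
Proof.
rewrite (reindex_onto (fill x) (restr n i)); last by move=> y /eqP; exact: fill_restr.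
by apply: eq_bigl => w; rewrite outside_fill restr_fill !eqxx.
Qed.

Definition window_shift (j : 'I_N) : 'I_N := Ordinal (window_site_lt i j).

Lemma window_shift_inj : injective window_shift.
Proof.
move=> a b /(congr1 val) /= eq_ab; apply: val_inj.
by have := congr1 (window_pos i) eq_ab; rewrite !window_posK.
Qed.

Definition window_rot : {perm 'I_N} := perm window_shift_inj.

Definition outside_bits (x : bits N) : bits (N - n) :=
  [tuple nth false x ((i + (n + l)) %% N) | l < N - n].

Lemma permute_fill x w : permute_bits window_rot (fill x w) = glue N w (outside_bits x).
Proof.
apply: eq_from_tnth => j; rewrite tnth_mktuple permE tnth_mktuple /=.
rewrite in_windowE //= window_posK // /glue tnth_mktuple nth_cat size_tuple.
case: ltnP => // le_nj.
have lt_jn : (j - n < N - n)%N by have := ltn_ord j; lia.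
rewrite (nth_mktuple_lt _ _ lt_jn) /= (nth_bits _ (window_site_lt i _)); congr tnth.
by apply: val_inj => /=; congr (_ %% _)%N; lia.
Qed.

End Window.

Lemma embedE (C : numClosedFieldType) N n (i : 'I_N) (h : op C n) x y :
  embed i h x y =
  if outside n i x == outside n i y then h (restr n i x) (restr n i y) else 0.
Proof. by rewrite /embed agree_outsideE. Qed.

(* With h = h^* h, the quadratic form of embed i h is a sum over c of
   block-diagonal Gram forms, blocks being the fibres of outside. *)
Lemma embed_psd (C : numClosedFieldType) N n (i : 'I_N) (h : op C n) (v : vec C N) :
  (forall a b, h a b = \sum_c (h c a)^* * h c b) ->
  0 <= \sum_x \sum_y (v x)^* * embed i h x y * v y.
Proof.
move=> h_gram.
pose g c x := h c (restr n i x) * v x.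
have -> : \sum_x \sum_y (v x)^* * embed i h x y * v y =
   \sum_c \sum_x \sum_y (if outside n i x == outside n i y then (g c x)^* * g c y else 0).
  transitivity (\sum_x \sum_y \sum_c
      (if outside n i x == outside n i y then (g c x)^* * g c y else 0)).
    apply: eq_bigr => x _; apply: eq_bigr => y _; rewrite embedE.
    case: eqP => _; last by rewrite mulr0 mul0r big1.
    rewrite h_gram mulr_sumr mulr_suml; apply: eq_bigr => c _.
    by rewrite /g rmorphM; ring.
  by under eq_bigr do rewrite exchange_big /=; rewrite exchange_big.
by apply: sumr_ge0 => c _; exact: block_gram_ge0.
Qed.

Lemma local_sum_psd (C : numClosedFieldType) N n (h : op C n) :
  (forall a b, h a b = \sum_c (h c a)^* * h c b) -> psd (local_sum N h).
Proof.
move=> h_gram v; rewrite /local_sum.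
have -> : \sum_x \sum_y (v x)^* * (\sum_(i < N) embed i h x y) * v y
    = \sum_(i < N) \sum_x \sum_y (v x)^* * embed i h x y * v y.
  symmetry; rewrite exchange_big /=; apply: eq_bigr => x _.
  rewrite exchange_big /=; apply: eq_bigr => y _.
  by rewrite mulr_sumr mulr_suml.
by apply: sumr_ge0 => i _; exact: embed_psd.
Qed.

(* Up to a permutation of the sites, the part of psi seen by embed i h is
   psi(w, z) with w in the window, and every row of h is orthogonal to it. *)
Lemma embed_sym_kernel (C : numClosedFieldType) N n (i : 'I_N) (h : op C n)
    (psi : vec C N) :
  (n <= N)%N -> sym_state psi -> (forall a b, h a b = (h b a)^*) ->
  (forall a (z : bits (N - n)), \sum_w (psi (glue N w z))^* * h w a = 0) ->
  forall x, apply (embed i h) psi x = 0.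
Proof.
move=> le_nN psi_sym h_herm h_cols x.
transitivity (\sum_(y | outside n i y == outside n i x)
                h (restr n i x) (restr n i y) * psi y).
  rewrite /apply [RHS]big_mkcond /=; apply: eq_bigr => y _; rewrite embedE eq_sym.
  by case: eqP => //; rewrite mul0r.
rewrite sum_outside_fiber // -[RHS]conjC0 -[in RHS](h_cols (restr n i x) (outside_bits n i x)).
rewrite rmorph_sum; apply: eq_bigr => w _.
rewrite restr_fill // rmorphM /= conjCK -h_herm mulrC.
by rewrite -(psi_sym (window_rot i)) permute_fill.
Qed.

Lemma local_sum_sym_kernel (C : numClosedFieldType) N n (h : op C n) (psi : vec C N) :
  (n <= N)%N -> sym_state psi -> (forall a b, h a b = (h b a)^*) ->
  (forall a (z : bits (N - n)), \sum_w (psi (glue N w z))^* * h w a = 0) ->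
  forall x, apply (local_sum N h) psi x = 0.
Proof.
move=> le_nN psi_sym h_herm h_cols x; rewrite /apply /local_sum.
under eq_bigr do rewrite mulr_suml.
by rewrite exchange_big big1 // => i _; exact: embed_sym_kernel.
Qed.

Lemma local_sum_neq0 (C : numClosedFieldType) N n (h : op C n) :
  (0 < N)%N -> (n <= N)%N -> (forall a b, h a b = \sum_c (h c a)^* * h c b) ->
  nonzero_op h -> nonzero_op (local_sum N h).
Proof.
move=> N_gt0 le_nN h_gram [a [b hab_neq0]].
have diag_ge0 c : 0 <= h c c.
  by rewrite h_gram; apply: sumr_ge0 => d _; rewrite mulrC mul_conjC_ge0.
have hbb_neq0 : h b b != 0.
  by apply: contraNneq hab_neq0; rewrite h_gram => /sum_conjCM_eq0 ->.
pose i0 : 'I_N := Ordinal N_gt0.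
pose x := fill i0 [tuple of nseq N false] b.
exists x, x; rewrite /local_sum; under eq_bigr do rewrite embedE eqxx.
apply/eqP => /(psumr_eq0P (fun j _ => diag_ge0 _)) sum0.
by move: hbb_neq0; have := sum0 i0 isT; rewrite /x restr_fill // => ->; rewrite eqxx.
Qed.

Theorem mainTheorem9 (C : numClosedFieldType) (N : nat) (psi : vec C N) :
  (2 <= N)%N -> sym_state psi -> nonzero_vec psi ->
  (exists phi : vec C (N./2).+1,
      nonzero_vec phi /\ sym_state phi /\
      forall x, apply (reduced (N./2).+1 psi) phi x = 0) /\
  (exists h : op C (N./2).+1,
      is_orth_proj h (kerSym (reduced (N./2).+1 psi))) /\
  (forall h : op C (N./2).+1,
      is_orth_proj h (kerSym (reduced (N./2).+1 psi)) ->
      nonzero_op (local_sum N h) /\ psd (local_sum N h) /\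
      forall x, apply (local_sum N h) psi x = 0).
Proof.
move=> N_ge2 psi_sym _.
have N_half := odd_double_half N; rewrite -muln2 in N_half.
have le_nN : ((N./2).+1 <= N)%N by case: (odd N) N_half => /=; lia.
have lt_mn : (N - (N./2).+1 < (N./2).+1)%N by case: (odd N) N_half => /=; lia.
have [phi [phi_nz [phi_sym phi_ker]]] := sym_kernel_exists psi_sym le_nN lt_mn.
split; first by exists phi.
split; first exact: orth_proj_kerSym.
move=> h h_proj; have [_ h_herm _] := h_proj.
have h_cols a (z : bits (N - (N./2).+1)) : \sum_w (psi (glue N w z))^* * h w a = 0.
  by case: (orth_proj_col h_proj a) => _ /reduced_kerP /(_ z).
split; [|split].
- apply: local_sum_neq0 (orth_proj_gram h_proj) _; [lia | done |].
  by apply: (orth_proj_neq0 h_proj (v := phi)).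
- exact: local_sum_psd (orth_proj_gram h_proj).
- exact: local_sum_sym_kernel.
Qed.
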